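(* Let $h,h'$ be decision trees, $i$ a leaf of $h$ and $j$ a leaf of $h'$ with $l_{h,i}\ne l_{h',j}$. Let $S$ be a finite dataset and $S_i=\{x\in S:\mathrm{LineTree}_{h,i}(x)=l_{h,i}\}$ (assumed nonempty). Then $D_{S_i}(\mathrm{LineTree}_{h,i},\mathrm{LineTree}_{h',j})\le D_{S_i}(h,h')$.
   Context: A decision tree routes a point from the root; each internal node compares one coordinate with a threshold, each leaf carries a label. For a tree $h$ and leaf $i$, $l_{h,i}\in\{0,1\}$ is the label of leaf $i$, and $\mathrm{LineTree}_{h,i}$ is the classifier assigning label $l_{h,i}$ to all inputs that reach leaf $i$ in $h$ and label $1-l_{h,i}$ to all other inputs. $D_T(f,g)=\frac1{|T|}\sum_{x\in T}\mathbb{I}(f(x)\ne g(x))$. *)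

From mathcomp Require Import all_boot all_order all_algebra.
Set Implicit Arguments. Unset Strict Implicit. Unset Printing Implicit Defensive.
Import Order.TTheory GRing.Theory Num.Theory.
Local Open Scope ring_scope.

(* Leaves carry a label in {0,1}, encoded as bool (false = 0, true = 1). *)
Inductive dtree (d : nat) (R : Type) : Type :=
| Leaf of bool
| Node of 'I_d & R & dtree d R & dtree d R.

Arguments Leaf {d R}.
Arguments Node {d R}.

Section DT.
Variables (R : realFieldType) (d : nat).
Implicit Types (h : dtree d R) (x : 'I_d -> R) (p : seq bool).

(* Leaves are addressed by their path from the root: false = left, true = right. *)
Fixpoint is_leaf h p : bool :=
  match h, p with
  | Leaf _, [::] => true
  | Node _ _ hl hr, b :: p' => if b then is_leaf hr p' else is_leaf hl p'
  | _, _ => false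
  end.

(* label of the leaf at address p (default false if p is not a leaf) *)
Fixpoint leaf_label h p : bool :=
  match h, p with
  | Leaf l, [::] => l
  | Node _ _ hl hr, b :: p' => if b then leaf_label hr p' else leaf_label hl p'
  | _, _ => false
  end.

Fixpoint route h x : seq bool :=
  match h with
  | Leaf _ => [::]
  | Node c t hl hr => if x c <= t then false :: route hl x else true :: route hr x
  end.

Fixpoint eval h x : bool :=
  match h with
  | Leaf l => l
  | Node c t hl hr => if x c <= t then eval hl x else eval hr x
  end.

Definition LineTree h p x : bool :=
  if route h x == p then leaf_label h p else ~~ leaf_label h p.

(* D_T(f,g) = (1/|T|) * #{x in T | f x <> g x}, T a finite dataset (a list,
   duplicates counted with multiplicity) *)
Definition Dis (T : seq ('I_d -> R)) (f g : ('I_d -> R) -> bool) : R :=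
  (size T)%:R^-1 * (\sum_(x <- T) (f x != g x)%:R).

End DT.

(* On S_i every input reaches leaf i of h, so LineTree_{h,i} agrees with h
   there.  LineTree_{h',j} agrees with h' on the inputs reaching leaf j and
   outputs the opposite label 1 - l_{h',j} = l_{h,i} on all others, where it
   therefore agrees with LineTree_{h,i}.  Hence every point of S_i on which the
   two line trees disagree is a point on which h and h' disagree. *)

From mathcomp Require Import all_boot all_order all_algebra.
Set Implicit Arguments. Unset Strict Implicit. Unset Printing Implicit Defensive.
Import Order.TTheory GRing.Theory Num.Theory.
Local Open Scope ring_scope.

Section LineTree.
Variables (R : realFieldType) (d : nat).
Implicit Types (h : dtree d R) (x : 'I_d -> R) (p : seq bool).

Lemma eval_route h x : eval h x = leaf_label h (route h x).
Proof. by elim: h => [l|c t hl IHl hr IHr] //=; case: ifP. Qed.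

Lemma LineTree_labelE h p x :
  (LineTree h p x == leaf_label h p) = (route h x == p).
Proof. by rewrite /LineTree; case: (route h x == p); case: (leaf_label h p). Qed.

Lemma LineTree_route h p x : route h x = p -> LineTree h p x = eval h x.
Proof. by move=> hx; rewrite /LineTree hx eqxx eval_route hx. Qed.

Lemma LineTree_off_route h p x : route h x != p -> LineTree h p x = ~~ leaf_label h p.
Proof. by move/negbTE => hx; rewrite /LineTree hx. Qed.

Lemma LineTree_neq_eval h h' i j x :
  leaf_label h i != leaf_label h' j -> route h x = i ->
  LineTree h i x != LineTree h' j x -> eval h x != eval h' x.
Proof.
move=> labels_neq hx; rewrite (LineTree_route hx).
have [/LineTree_route -> //|h'x] := eqVneq (route h' x) j.
rewrite (LineTree_off_route h'x) eval_route hx.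
by case: (leaf_label h i) (leaf_label h' j) labels_neq => -[].
Qed.

Lemma le_Dis (T : seq ('I_d -> R)) (f g f' g' : ('I_d -> R) -> bool) :
  all [pred x | (f x != g x) ==> (f' x != g' x)] T -> Dis T f g <= Dis T f' g'.
Proof.
move=> sub; rewrite /Dis ler_wpM2l ?invr_ge0 ?ler0n //.
elim: T sub => [|x T IH] /=; first by rewrite !big_nil.
move=> /andP[fgx /IH le_rest]; rewrite !big_cons lerD // ler_nat.
by case: (f x != g x) fgx => //= ->.
Qed.

End LineTree.

Theorem lemma19 (R : realFieldType) (d : nat) (h h' : dtree d R)
  (i j : seq bool) (S : seq ('I_d -> R)) :
  is_leaf h i -> is_leaf h' j ->
  leaf_label h i != leaf_label h' j ->
  let Si := [seq x <- S | LineTree h i x == leaf_label h i] in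
  (0 < size Si)%N ->
  Dis Si (LineTree h i) (LineTree h' j) <= Dis Si (eval h) (eval h').
Proof.
move=> _ _ labels_neq Si _; apply: le_Dis.
rewrite all_filter; apply: sub_all (all_predT S) => x _ /=.
rewrite LineTree_labelE; apply/implyP => /eqP hx; apply/implyP.
exact: LineTree_neq_eval.
Qed.
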